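(* There exists a Fraïssé sequence $F\colon\omega\to\mathbf{FinGame}_{emb}$, and the colimit of $F$ in $\mathbf{Games}_A$ is (isomorphic to) $G_{FL}=(\omega^{<\omega},c_{00}(\omega))$.
   Context: Finite sequences, game trees, runs: for a set $M$, $M^{<\omega}=\bigcup_n M^n$, $|t|$ is the length, $t\restriction k$ the initial segment of length $k$, $t^\frown x$ the one-step extension. A game tree is $T\subseteq M^{<\omega}$ closed under initial segments in which every $t$ has an extension $t^\frown x\in T$; $\mathrm{Run}(T)=\{R\in M^\omega: R\restriction n\in T\ \forall n\}$. A game is $G=(T,A)$ with $A\subseteq \mathrm{Run}(T)$; it is finite if $\mathrm{Run}(T)$ is finite. A chronological map $f\colon T_1\to T_2$ satisfies $|f(t)|=|t|$ and $f(t\restriction k)=f(t)\restriction k$; it induces $\bar f$ on runs with $\bar f(R)\restriction n=f(R\restriction n)$. An A-morphism $(T_1,A_1)\to(T_2,A_2)$ is a chronological $f$ with $\bar f[A_1]\subseteq A_2$; a game embedding is an injective chronological $f$ with $\bar f(R)\in A_2\iff R\in A_1$ for all $R\in\mathrm{Run}(T_1)$. $\mathbf{Games}_A$ is the category of games and A-morphisms (it has colimits of $\omega$-sequences); $\mathbf{FinGame}_{emb}$ is the category of finite games and game embeddings. The ordinal $\omega$ is regarded as a category with a unique morphism $n\to m$ iff $n\le m$; for a functor $F$ on $\omega$ write $F_n^m=F(n\le m)$. A Fraïssé sequence in $\mathbf{FinGame}_{emb}$ is a functor $F\colon\omega\to\mathbf{FinGame}_{emb}$ such that (U) for every finite game $X$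 there are $n$ and a game embedding $X\to F(n)$, and (A) for every $n$ and every game embedding $f\colon F(n)\to X$ with $X$ finite there are $m\ge n$ and a game embedding $g\colon X\to F(m)$ with $g\circ f=F_n^m$. $c_{00}(\omega)$ is the set of eventually zero sequences in $\omega^\omega$. *)

From mathcomp Require Import all_boot.
Set Implicit Arguments. Unset Strict Implicit. Unset Printing Implicit Defensive.

(* t |> k  is  take k t ;  t ^ x  is  rcons t x ;  R |> n  is  mkseq R n. *)

Definition is_run (M : Type) (T : seq M -> Prop) (R : nat -> M) : Prop :=
  forall n, T (mkseq R n).

Record game := Game {
  gM : Type;
  gT : seq gM -> Prop;
  gA : (nat -> gM) -> Prop;
  gT_nil : gT [::];
  gT_prefix : forall t k, gT t -> gT (take k t);
  gT_ext : forall t, gT t -> exists x, gT (rcons t x);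
  gA_run : forall R, gA R -> is_run gT R
}.

Definition finite_game (G : game) : Prop :=
  exists (N : nat) (r : nat -> nat -> gM G),
    forall R, is_run (@gT G) R -> exists i, i < N /\ forall k, R k = r i k.

(** Chronological maps T1 -> T2 (given as functions on sequences, only their
    behaviour on T1 matters). *)
Definition chronological (G1 G2 : game) (f : seq (gM G1) -> seq (gM G2)) : Prop :=
  forall t, gT t ->
    [/\ gT (f t), size (f t) = size t & forall k, f (take k t) = take k (f t)].

Definition induced_run (G1 G2 : game) (f : seq (gM G1) -> seq (gM G2))
  (R : nat -> gM G1) (S : nat -> gM G2) : Prop :=
  forall n, f (mkseq R n) = mkseq S n.

Definition A_morphism (G1 G2 : game) (f : seq (gM G1) -> seq (gM G2)) : Prop :=
  chronological f /\
  forall R S, gA R -> induced_run f R S -> gA S.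

Definition game_embedding (G1 G2 : game) (f : seq (gM G1) -> seq (gM G2)) : Prop :=
  [/\ chronological f,
      (forall t t', gT t -> gT t' -> f t = f t' -> t = t') &
      forall R S, is_run (@gT G1) R -> induced_run f R S -> (gA S <-> gA R)].

Definition mor_eq (G1 G2 : game) (f g : seq (gM G1) -> seq (gM G2)) : Prop :=
  forall t, @gT G1 t -> f t = g t.

(** A functor F : omega -> FinGame_emb ; Fm n m is F_n^m (meaningful for n <= m). *)
Record omega_seq := OmegaSeq {
  Fo : nat -> game;
  Fm : forall n m : nat, seq (gM (Fo n)) -> seq (gM (Fo m));
  Fo_finite : forall n, finite_game (Fo n);
  Fm_emb : forall n m, n <= m -> game_embedding (@Fm n m);
  Fm_id : forall n, mor_eq (@Fm n n) id;
  Fm_comp : forall n m k, n <= m -> m <= k ->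
    mor_eq (@Fm n k) (fun t => @Fm m k (@Fm n m t))
}.

Definition fraisse (F : omega_seq) : Prop :=
  (forall X : game, finite_game X ->
     exists n (f : seq (gM X) -> seq (gM (Fo F n))), game_embedding f) /\
  (forall n (X : game) (f : seq (gM (Fo F n)) -> seq (gM X)),
     finite_game X -> game_embedding f ->
     exists m (g : seq (gM X) -> seq (gM (Fo F m))),
       [/\ n <= m, game_embedding g &
           mor_eq (fun t => g (f t)) (@Fm F n m)]).

Definition cocone (F : omega_seq) (G : game)
  (c : forall n, seq (gM (Fo F n)) -> seq (gM G)) : Prop :=
  (forall n, A_morphism (c n)) /\
  (forall n m, n <= m -> mor_eq (fun t => c m (@Fm F n m t)) (c n)).

Definition is_colimit (F : omega_seq) (G : game)
  (c : forall n, seq (gM (Fo F n)) -> seq (gM G)) : Prop :=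
  cocone c /\
  forall (H : game) (d : forall n, seq (gM (Fo F n)) -> seq (gM H)),
    cocone d ->
    (exists u : seq (gM G) -> seq (gM H),
        A_morphism u /\ forall n, mor_eq (fun t => u (c n t)) (d n)) /\
    (forall u v : seq (gM G) -> seq (gM H),
        A_morphism u -> A_morphism v ->
        (forall n, mor_eq (fun t => u (c n t)) (d n)) ->
        (forall n, mor_eq (fun t => v (c n t)) (d n)) ->
        mor_eq u v).

Definition c00 (R : nat -> nat) : Prop := exists N, forall n, N <= n -> R n = 0.

Lemma GFL_nil : (fun _ : seq nat => True) [::]. Proof. by []. Qed.
Lemma GFL_prefix : forall (t : seq nat) k, (fun _ => True) t -> (fun _ : seq nat => True) (take k t).
Proof. by []. Qed.
Lemma GFL_ext : forall t : seq nat, (fun _ => True) t -> exists x, (fun _ : seq nat => True) (rcons t x).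
Proof. by move=> t _; exists 0. Qed.
Lemma GFL_run : forall R, c00 R -> is_run (fun _ : seq nat => True) R.
Proof. by []. Qed.

Definition G_FL : game := @Game nat (fun _ => True) c00 GFL_nil GFL_prefix GFL_ext GFL_run.

From mathcomp Require Import all_boot zify.
From Stdlib Require Import ClassicalEpsilon Classical FunctionalExtensionality.

Set Implicit Arguments. Unset Strict Implicit. Unset Printing Implicit Defensive.

(** The game [F m] has moves [0 .. m+1], every branch repeats a single bit from
    time [m] on, and a run is won iff that bit is [0]; the [F m] increase with [m]
    and their union is [G_FL], which gives the colimit. For the extension property,
    take an embedding of [F n] into a finite game [X]. Finitely many runs are
    separated, and their membership in the image is decided, before some depth [D].
    Relabel [X] by keeping the labels of the image, giving each remaining node of
    depth at most [D] a fresh label naming a run through it, and giving each deeper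
    node the bit saying whether its (by then unique) run is lost; this embeds [X]
    into [F m] for [m] large. *)

Definition asbool (P : Prop) : bool := if excluded_middle_informative P then true else false.

Lemma asboolP P : reflect P (asbool P).
Proof. by rewrite /asbool; case: excluded_middle_informative => Pb; constructor. Qed.

Lemma take_mkseq (T : Type) (f : nat -> T) k n : take k (mkseq f n) = mkseq f (minn k n).
Proof. by rewrite /mkseq -map_take take_iota. Qed.

Lemma mkseq_eq_fun (T : Type) (f g : nat -> T) : (forall n, mkseq f n = mkseq g n) -> f =1 g.
Proof. by move=> fg k; have := congr1 (nth (f k) ^~ k) (fg k.+1); rewrite !nth_mkseq. Qed.

Lemma last_take (T : Type) (x0 : T) (s : seq T) k :
  k < size s -> last x0 (take k.+1 s) = nth x0 s k.
Proof. by move=> ks; rewrite -nth_last size_takel // nth_take. Qed.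

Section LabelMap.
Variables (T U : Type) (phi : seq T -> U).

Definition label_map (t : seq T) : seq U := mkseq (fun k => phi (take k.+1 t)) (size t).

Lemma size_label_map t : size (label_map t) = size t.
Proof. exact: size_mkseq. Qed.

Lemma nth_label_map x0 t k : k < size t -> nth x0 (label_map t) k = phi (take k.+1 t).
Proof. exact: nth_mkseq. Qed.

Lemma label_map_take t k : label_map (take k t) = take k (label_map t).
Proof.
rewrite /label_map /mkseq -map_take take_iota size_take_min minnC.
by apply/eq_in_map => j; rewrite mem_iota leq_min => /and3P[_ _ jk]; rewrite take_takel.
Qed.

Lemma label_map_rcons k u :
  size u = k.+1 -> label_map u = rcons (label_map (take k u)) (phi u).
Proof.
move=> uk; rewrite label_map_take -{1}(take_size (label_map u)) size_label_map uk.
by rewrite (take_nth (phi u)) ?size_label_map ?uk // nth_label_map ?uk // -uk take_size.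
Qed.

Lemma label_map_run R S :
  (forall n, label_map (mkseq R n) = mkseq S n) -> forall k, S k = phi (mkseq R k.+1).
Proof.
move=> RS k; have := congr1 (nth (S k) ^~ k) (RS k.+1).
by rewrite nth_mkseq // nth_label_map ?size_mkseq // take_mkseq minnn.
Qed.

Lemma label_map_inj (P : seq T -> Prop) :
  (forall t k, P t -> P (take k t)) ->
  (forall k u u', P u -> P u' -> size u = k.+1 -> size u' = k.+1 ->
     take k u = take k u' -> phi u = phi u' -> u = u') ->
  forall t t', P t -> P t' -> label_map t = label_map t' -> t = t'.
Proof.
move=> P_take sibling_inj t t' Pt Pt' tt'.
have st : size t = size t' by rewrite -size_label_map tt' size_label_map.
suff pre k : k <= size t -> take k t = take k t' by rewrite -(take_size t) pre // st take_size.
elim: k => [|k IH] kt; first by rewrite !take0.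
have kt' : k < size t' by rewrite -st.
apply: (sibling_inj k); rewrite ?size_takel ?take_takel ?IH ?(ltnW kt) //; try exact: P_take.
have := congr1 (fun s => nth (phi t) s k) tt'.
by rewrite !nth_label_map.
Qed.

End LabelMap.

Lemma eq_label_map (T U : Type) (phi psi : seq T -> U) t :
  (forall k, k < size t -> phi (take k.+1 t) = psi (take k.+1 t)) ->
  label_map phi t = label_map psi t.
Proof. by move=> phi_psi; apply/eq_in_map => k; rewrite mem_iota => /phi_psi. Qed.

Lemma label_map_last (T U : Type) (x0 : U) (h : seq T -> seq U) u :
  size (h u) = size u -> (forall k, h (take k u) = take k (h u)) ->
  label_map (fun v => last x0 (h v)) u = h u.
Proof.
move=> hu h_take; apply: (@eq_from_nth _ x0); first by rewrite size_label_map hu.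
by move=> k; rewrite size_label_map => ku; rewrite nth_label_map // h_take last_take // hu.
Qed.

Definition eventually (P : nat -> Prop) : Prop := exists D, forall D', D <= D' -> P D'.

Lemma eventually_and P Q : eventually P -> eventually Q -> eventually (fun D => P D /\ Q D).
Proof.
move=> [D1 P1] [D2 Q2]; exists (maxn D1 D2) => D' D'ge.
by split; [apply: P1 | apply: Q2]; lia.
Qed.

Lemma eventually_all_lt N (Q : nat -> nat -> Prop) :
  (forall i, i < N -> eventually (Q i)) -> eventually (fun D => forall i, i < N -> Q i D).
Proof.
elim: N => [|N IH] evQ; first by exists 0.
have [D QD] := eventually_and (IH (fun i iN => evQ i (leqW iN))) (evQ N (ltnSn N)).
exists D => D' /QD[QN QN'] i; rewrite ltnS leq_eqVlt => /orP[/eqP-> // | ]; exact: QN.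
Qed.

Lemma eventually_mkseq_sep (T : Type) (f g : nat -> T) :
  eventually (fun D => mkseq f D = mkseq g D -> f =1 g).
Proof.
have [fg | /not_all_ex_not[k0 fg]] := classic (f =1 g); first by exists 0 => *.
exists k0.+1 => D k0D fgD; case: fg.
by have := congr1 (nth (f k0) ^~ k0) fgD; rewrite !nth_mkseq.
Qed.

Lemma eventually_settled (T : Type) (P : seq T -> Prop) (R : nat -> T) :
  (forall u k, P u -> P (take k u)) ->
  eventually (fun D => (forall k, P (mkseq R k)) \/ ~ P (mkseq R D)).
Proof.
move=> P_take; have [all_P | /not_all_ex_not[k0 nP]] := classic (forall k, P (mkseq R k)).
  by exists 0; left.
exists k0 => D k0D; right => /(P_take _ k0); rewrite take_mkseq (minn_idPl k0D); exact: nP.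
Qed.

Lemma node_on_run (X : game) t : gT t -> exists R, is_run (@gT X) R /\ mkseq R (size t) = t.
Proof.
move=> Tt.
have [x0 _] := gT_ext (gT_nil X).
pose next u := rcons u (epsilon (inhabits x0) (fun x => gT (rcons u x))).
pose node j := iter j next t.
have node_T j : gT (node j).
  elim: j => [//|j IH]; apply: (epsilon_spec (inhabits x0) (fun x => gT (rcons (node j) x))).
  exact: gT_ext.
have size_node j : size (node j) = size t + j.
  by elim: j => [|j IH]; rewrite ?addn0 //= size_rcons -/(node j) IH addnS.
have nth_node j i p : p < size (node j) -> nth x0 (node (j + i)) p = nth x0 (node j) p.
  elim: i => [|i IH] pj; first by rewrite addn0.
  rewrite addnS /= nth_rcons -/(node (j + i)) size_node.
  by rewrite size_node in pj; rewrite ifT ?IH ?size_node //; lia.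
pose R k := nth x0 (node k.+1) k.
have mkseq_R k : mkseq R k = take k (node k).
  apply: (@eq_from_nth _ x0); first by rewrite size_mkseq size_takel // size_node; lia.
  move=> p; rewrite size_mkseq => pk; rewrite nth_mkseq // nth_take //.
  by rewrite /R -(subnKC pk) nth_node // size_node; lia.
exists R; split=> [k|]; first by rewrite mkseq_R; apply: gT_prefix.
apply: (@eq_from_nth _ x0); first by rewrite size_mkseq.
move=> p; rewrite size_mkseq => pt; rewrite nth_mkseq // /R.
by rewrite -(add0n p.+1) nth_node // size_node; lia.
Qed.

Lemma finite_cover_of_bounded_prefix (P : (nat -> nat) -> Prop) n L :
  (forall R, P R -> forall k, k <= n -> R k <= L) ->
  (forall R R', P R -> P R' -> (forall k, k <= n -> R k = R' k) -> R =1 R') ->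
  exists N (r : nat -> nat -> nat), forall R, P R -> exists i, i < N /\ R =1 r i.
Proof.
move=> P_bound P_sep.
pose codes := enum {ffun 'I_n.+1 -> 'I_L.+1}.
pose code R : {ffun 'I_n.+1 -> 'I_L.+1} := [ffun k : 'I_n.+1 => inord (R k)].
pose r i := epsilon (inhabits (fun _ => 0))
  (fun R => P R /\ code R = nth (code (fun _ => 0)) codes i).
exists (size codes), r => R PR; pose i := index (code R) codes; exists i.
have code_in : code R \in codes by rewrite mem_enum.
split; first by rewrite index_mem.
have [Pr /ffunP code_eq] : P (r i) /\ code (r i) = code R.
  have <- : nth (code (fun _ => 0)) codes i = code R by rewrite nth_index.
  apply: (epsilon_spec _ (fun R => P R /\ code R = nth (code (fun _ => 0)) codes i)).
  by exists R; rewrite nth_index.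
apply: P_sep => // k kn; have := congr1 val (code_eq (inord k)).
by rewrite !ffunE /= !inordK // ltnS P_bound.
Qed.

Definition Ftree (m : nat) (t : seq nat) : Prop :=
  (forall k, k < size t -> nth 0 t k < m.+2) /\
  exists b : bool, forall k, m <= k < size t -> nth 0 t k = b.

Lemma Ftree_nil m : Ftree m [::].
Proof. by split=> [k|]; last exists false => k /andP[]. Qed.

Lemma Ftree_take m t k : Ftree m t -> Ftree m (take k t).
Proof.
move=> [t_bound [b t_tail]]; split=> [j|]; last exists b => j.
  by rewrite size_take_min leq_min => /andP[jk jt]; rewrite nth_take // t_bound.
by rewrite size_take_min leq_min => /and3P[mj jk jt]; rewrite nth_take // t_tail ?mj.
Qed.

Lemma Ftree_rcons m t : Ftree m t -> exists x, Ftree m (rcons t x).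
Proof.
move=> [t_bound [b t_tail]]; exists b; split=> [k|]; last exists b => k.
  rewrite size_rcons ltnS nth_rcons leq_eqVlt => /orP[/eqP->|kt]; last by rewrite kt t_bound.
  by rewrite ltnn eqxx; case: b {t_tail}.
rewrite size_rcons ltnS nth_rcons => /andP[mk]; rewrite leq_eqVlt => /orP[/eqP->|kt].
  by rewrite ltnn eqxx.
by rewrite kt t_tail ?mk.
Qed.

Lemma Ftree_mono n m t : n <= m -> Ftree n t -> Ftree m t.
Proof.
move=> nm [t_bound [b t_tail]]; split=> [k kt|]; first by rewrite (leq_trans (t_bound k kt)).
by exists b => k /andP[mk kt]; rewrite t_tail // kt (leq_trans nm mk).
Qed.

Lemma Ftree_last m t : Ftree m t -> last 0 t < m.+2.
Proof. by case: t => [//|x t] [t_bound _]; rewrite -nth_last; apply: t_bound. Qed.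

Lemma Ftree_runP m R :
  is_run (Ftree m) R <-> (forall k, R k < m.+2) /\ exists b : bool, forall k, m <= k -> R k = b.
Proof.
split=> [R_run | [R_bound [b R_tail]] k]; last first.
  split=> [j|]; last exists b => j; rewrite size_mkseq.
    by move=> jk; rewrite nth_mkseq.
  by move=> /andP[mj jk]; rewrite nth_mkseq // R_tail.
have R_tail k : exists b : bool, forall j, m <= j <= k -> R j = b.
  have [_ [b tail]] := R_run k.+1; exists b => j /andP[mj jk].
  by rewrite -(nth_mkseq 0 R (jk : j < k.+1)) tail ?size_mkseq ?mj.
split=> [k|]; first by have [/(_ k) + _] := R_run k.+1; rewrite size_mkseq nth_mkseq //; apply.
have [b Rm] := R_tail m; exists b => k mk.
have [b' Rk] := R_tail k.
by rewrite Rk ?mk ?leqnn // -(Rk m) ?leqnn ?mk // Rm // leqnn.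
Qed.

Definition depth (t : seq nat) : nat := size t + \max_(x <- t) x.

Lemma Ftree_depth t : Ftree (depth t) t.
Proof.
split=> [k kt|]; last by exists false => k; rewrite /depth; lia.
have := @leq_bigmax_seq _ t (fun _ => true) (fun x => x) _ (mem_nth 0 kt) isT => le_max.
by rewrite ltnS leqW // (leq_trans le_max) // leq_addl.
Qed.

Definition Fwin (m : nat) (R : nat -> nat) : Prop := is_run (Ftree m) R /\ c00 R.

Definition Fgame (m : nat) : game :=
  @Game nat (Ftree m) (Fwin m) (Ftree_nil m) (fun t k => @Ftree_take m t k) (@Ftree_rcons m)
    (fun R => @proj1 _ _).

Lemma Fgame_finite m : finite_game (Fgame m).
Proof.
apply: (@finite_cover_of_bounded_prefix _ m m.+1) => [R /Ftree_runP[R_bound _] k _|R R'].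
  by rewrite -ltnS.
move=> /Ftree_runP[_ [b R_tail]] /Ftree_runP[_ [b' R'_tail]] RR' k.
have [mk|/ltnW] := leqP m k; last exact: RR'.
by rewrite R_tail // R'_tail // -(R_tail m) // -(R'_tail m) // RR'.
Qed.

Lemma Fgame_incl n m : n <= m -> game_embedding (G1 := Fgame n) (G2 := Fgame m) id.
Proof.
move=> nm; split=> [t /= Tt|//|R S /= R_run RS].
  by split=> //; exact: Ftree_mono Tt.
have /mkseq_eq_fun RS' : forall k, mkseq R k = mkseq S k by [].
have S_run : is_run (Ftree m) S by move=> k; rewrite -RS; apply: Ftree_mono (R_run k).
rewrite /Fwin /c00; split=> [[_ [N SN]]|[_ [N RN]]]; split=> //; exists N => k Nk.
  by rewrite RS' SN.
by rewrite -RS' RN.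
Qed.

Definition Fseq : omega_seq :=
  @OmegaSeq Fgame (fun n m t => t) Fgame_finite (fun n m => @Fgame_incl n m)
    (fun n t _ => erefl) (fun n m k _ _ t _ => erefl).

Section Extension.

Variables (X : game) (n : nat) (Img : seq (gM X) -> Prop) (h : seq (gM X) -> seq nat).
Hypothesis Img_take : forall u k, Img u -> Img (take k u).
Hypothesis h_tree : forall u, Img u -> Ftree n (h u).
Hypothesis h_size : forall u, Img u -> size (h u) = size u.
Hypothesis h_take : forall u k, Img u -> h (take k u) = take k (h u).
Hypothesis h_inj : forall u u', Img u -> Img u' -> h u = h u' -> u = u'.
Hypothesis h_win : forall R S, is_run (@gT X) R -> (forall k, Img (mkseq R k)) ->
  (forall k, h (mkseq R k) = mkseq S k) -> (gA R <-> c00 S).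

Variables (N : nat) (r : nat -> nat -> gM X).
Hypothesis r_cover : forall R, is_run (@gT X) R -> exists i, i < N /\ R =1 r i.

Variable D : nat.
Hypothesis D_sep : forall R R', is_run (@gT X) R -> is_run (@gT X) R' ->
  mkseq R D = mkseq R' D -> R =1 R'.
Hypothesis D_settled : forall R, is_run (@gT X) R ->
  (forall k, Img (mkseq R k)) \/ ~ Img (mkseq R D).

Implicit Types (u v t : seq (gM X)) (R : nat -> gM X).

Definition branch_index (u : seq (gM X)) : nat :=
  epsilon (inhabits 0) (fun i => i < N /\ is_run (@gT X) (r i) /\ mkseq (r i) (size u) = u).

Definition branch (u : seq (gM X)) : nat -> gM X := r (branch_index u).

Lemma branch_indexP u : gT u ->
  [/\ branch_index u < N, is_run (@gT X) (branch u) & mkseq (branch u) (size u) = u].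
Proof.
move=> /node_on_run[R [R_run Ru]]; have [i [iN Ri]] := r_cover R_run.
have [|iN' [run_i ri]] :=
  epsilon_spec (inhabits 0) (fun i => i < N /\ is_run (@gT X) (r i) /\ mkseq (r i) (size u) = u).
  by exists i; split=> //; split=> [k|]; rewrite -(eq_mkseq Ri) // Ru.
by split.
Qed.

Lemma branch_run u : gT u -> is_run (@gT X) (branch u).
Proof. by case/branch_indexP. Qed.

Lemma branch_prefix u k : gT u -> k <= size u -> mkseq (branch u) k = take k u.
Proof.
by move=> Tu ku; have [_ _ bu] := branch_indexP Tu; rewrite -{2}bu take_mkseq (minn_idPl ku).
Qed.

Lemma branch_deep u v : gT u -> gT v -> D <= size u -> take (size u) v = u ->
  branch u = branch v.
Proof.
move=> Tu Tv Du vu; apply: functional_extensionality; apply: D_sep; try exact: branch_run.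
have uv : size u <= size v by rewrite -vu size_take_min geq_minr.
by rewrite !branch_prefix ?(leq_trans Du) // -vu take_takel.
Qed.

Lemma branch_of_run R k : is_run (@gT X) R -> D <= k -> branch (mkseq R k) = R.
Proof.
move=> R_run Dk; have [_ b_run bR] := branch_indexP (R_run k).
apply: functional_extensionality; apply: D_sep => //.
by rewrite branch_prefix // ?size_mkseq // take_mkseq (minn_idPl Dk).
Qed.

Lemma not_Img_deep u k : gT u -> ~ Img u -> D <= k <= size u -> ~ Img (take k u).
Proof.
move=> Tu uImg /andP[Dk ku] ukImg; have [_ b_run bu] := branch_indexP Tu.
have [all_Img | DImg] := D_settled b_run; first by apply: uImg; rewrite -bu.
apply: DImg; rewrite branch_prefix ?(leq_trans Dk) // -(take_takel _ Dk); exact: Img_take.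
Qed.

(* Fresh labels start at [n.+2], above every label of [F n]. *)
Definition label (u : seq (gM X)) : nat :=
  if asbool (Img u) then last 0 (h u)
  else if size u <= D then n.+2 + branch_index u
  else ~~ asbool (gA (branch u)).

Definition extension : seq (gM X) -> seq nat := label_map label.

Definition extension_level : nat := maxn D (n + N).

Lemma extension_Img u : Img u -> extension u = h u.
Proof.
move=> Iu; rewrite /extension -(label_map_last 0 (h_size Iu) (fun k => h_take k Iu)).
apply: eq_label_map => k _; rewrite /label.
by case: asboolP => // -[]; apply: Img_take.
Qed.

Lemma label_Img u : Img u -> label u < n.+2.
Proof.
by move=> Iu; rewrite /label; case: asboolP => // _; exact/Ftree_last/h_tree.
Qed.

Lemma label_fresh u : ~ Img u -> size u <= D -> label u = n.+2 + branch_index u.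
Proof. by move=> nIu uD; rewrite /label uD; case: asboolP. Qed.

Lemma label_deep u : ~ Img u -> D < size u -> label u = ~~ asbool (gA (branch u)).
Proof.
by move=> nIu Du; rewrite /label leqNgt Du; case: asboolP.
Qed.

Lemma label_lt u : gT u -> label u < extension_level.+2.
Proof.
move=> Tu; have lvl : n + N <= extension_level by apply: leq_maxr.
have [Iu | nIu] := classic (Img u); first by have := label_Img Iu; lia.
have [uD | Du] := leqP (size u) D; last by rewrite label_deep //; case: asbool.
by rewrite label_fresh //; have [iN _ _] := branch_indexP Tu; lia.
Qed.

Lemma siblings_deep k u u' : gT u -> gT u' -> D <= k -> size u = k.+1 -> size u' = k.+1 ->
  take k u = take k u' -> u = u'.
Proof.
move=> Tu Tu' Dk uk u'k uu'.
have parent w : gT w -> size w = k.+1 -> branch (take k w) = branch w.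
  by move=> Tw wk; apply: branch_deep; rewrite ?size_takel ?wk //; apply: gT_prefix.
rewrite -(take_size u) -(take_size u') -!branch_prefix // uk u'k.
by rewrite -(parent u) // -(parent u') // uu'.
Qed.

Lemma label_sibling_inj k u u' : gT u -> gT u' -> size u = k.+1 -> size u' = k.+1 ->
  take k u = take k u' -> label u = label u' -> u = u'.
Proof.
move=> Tu Tu' uk u'k uu'.
have [Dk | kD] := leqP D k; first by move=> _; apply: siblings_deep uu'.
have [Iu | nIu] := classic (Img u); have [Iu' | nIu'] := classic (Img u').
- move=> lab; apply: h_inj => //; rewrite -!extension_Img //.
  by rewrite /extension !(label_map_rcons _ uk) // (label_map_rcons _ u'k) uu' lab.
- rewrite (label_fresh nIu') ?u'k // => lab; exfalso.
  by have := label_Img Iu; rewrite lab leqNgt leq_addr.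
- rewrite (label_fresh nIu) ?uk // => lab; exfalso.
  by have := label_Img Iu'; rewrite -lab leqNgt leq_addr.
rewrite !label_fresh ?uk ?u'k // => /addnI idx.
have [_ _ bu] := branch_indexP Tu; have [_ _ bu'] := branch_indexP Tu'.
by rewrite -bu -bu' /branch idx uk u'k.
Qed.

Lemma label_tail t k : gT t -> ~ Img t -> extension_level <= k < size t ->
  label (take k.+1 t) = ~~ asbool (gA (branch t)).
Proof.
move=> Tt nIt /andP[lvl_k kt]; have Dk : D <= k by move: lvl_k; rewrite geq_max => /andP[].
have sk : size (take k.+1 t) = k.+1 by rewrite size_takel.
have nIk : ~ Img (take k.+1 t) by apply: not_Img_deep; rewrite // kt leqW.
rewrite label_deep ?sk // (@branch_deep _ t) ?sk ?leqW //; exact: gT_prefix.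
Qed.

Lemma extension_tree t : gT t -> Ftree extension_level (extension t).
Proof.
move=> Tt; have [It | nIt] := classic (Img t).
  by rewrite extension_Img //; apply: Ftree_mono (h_tree It); rewrite leq_max leq_addr orbT.
split=> [k|].
  by rewrite size_label_map => kt; rewrite nth_label_map // label_lt //; apply: gT_prefix.
exists (~~ asbool (gA (branch t))) => k; rewrite size_label_map => /andP[lvl_k kt].
by rewrite nth_label_map // label_tail ?lvl_k.
Qed.

Lemma label_run_tail R k0 k : is_run (@gT X) R -> ~ Img (mkseq R k0) -> maxn D k0 <= k ->
  label (mkseq R k.+1) = ~~ asbool (gA R).
Proof.
rewrite geq_max => R_run nI /andP[Dk k0k].
have nIk : ~ Img (mkseq R k.+1).
  by move=> /(Img_take k0); rewrite take_mkseq (minn_idPl (leqW k0k)).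
by rewrite label_deep ?size_mkseq ?ltnS // branch_of_run // leqW.
Qed.

Lemma extension_win R S : is_run (@gT X) R ->
  (forall k, extension (mkseq R k) = mkseq S k) -> (Fwin extension_level S <-> gA R).
Proof.
move=> R_run RS; have S_run : is_run (Ftree extension_level) S.
  by move=> k; rewrite -RS; apply: extension_tree.
rewrite /Fwin.
have [all_Img | /not_all_ex_not[k0 nI]] := classic (forall k, Img (mkseq R k)).
  have hRS k : h (mkseq R k) = mkseq S k by rewrite -extension_Img.
  by rewrite (h_win R_run all_Img hRS); tauto.
have S_tail k : maxn D k0 <= k -> S k = ~~ asbool (gA R).
  by move=> k0k; rewrite (label_map_run RS) (label_run_tail R_run nI).
split=> [[_ [M SM]] | AR].
  by have := S_tail _ (leq_maxl _ M); rewrite SM ?leq_maxr //; case: asboolP.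
by split=> //; exists (maxn D k0) => k /S_tail->; case: asboolP.
Qed.

Lemma extension_embedding : game_embedding (G2 := Fgame extension_level) extension.
Proof.
split=> [t Tt | | R S R_run RS]; last exact: extension_win.
  by split; [exact: extension_tree | exact: size_label_map | move=> k; exact: label_map_take].
by apply: label_map_inj label_sibling_inj; apply: gT_prefix.
Qed.

End Extension.

Lemma partial_embedding_extends (X : game) n
    (Img : seq (gM X) -> Prop) (h : seq (gM X) -> seq nat) :
  finite_game X ->
  (forall u k, Img u -> Img (take k u)) ->
  (forall u, Img u -> Ftree n (h u)) ->
  (forall u, Img u -> size (h u) = size u) ->
  (forall u k, Img u -> h (take k u) = take k (h u)) ->
  (forall u u', Img u -> Img u' -> h u = h u' -> u = u') ->
  (forall R S, is_run (@gT X) R -> (forall k, Img (mkseq R k)) ->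
     (forall k, h (mkseq R k) = mkseq S k) -> (gA R <-> c00 S)) ->
  exists m (g : seq (gM X) -> seq nat),
    [/\ n <= m, game_embedding (G2 := Fgame m) g & forall u, Img u -> g u = h u].
Proof.
move=> [N [r r_cover]] Img_take h_tree h_size h_take h_inj h_win.
have [D /(_ D (leqnn D))[r_sep r_settled]] : eventually (fun D =>
    (forall i, i < N -> forall j, j < N -> mkseq (r i) D = mkseq (r j) D -> r i =1 r j) /\
    (forall i, i < N -> (forall k, Img (mkseq (r i) k)) \/ ~ Img (mkseq (r i) D))).
  apply: eventually_and; apply: eventually_all_lt => i _; last exact: eventually_settled.
  by apply: eventually_all_lt => j _; apply: eventually_mkseq_sep.
have D_sep R R' : is_run (@gT X) R -> is_run (@gT X) R' -> mkseq R D = mkseq R' D -> R =1 R'.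
  move=> /r_cover[i [iN Ri]] /r_cover[j [jN R'j]] RR' k; rewrite Ri R'j; apply: r_sep => //.
  by rewrite -(eq_mkseq Ri) -(eq_mkseq R'j).
have D_settled R : is_run (@gT X) R -> (forall k, Img (mkseq R k)) \/ ~ Img (mkseq R D).
  move=> /r_cover[i [iN Ri]]; rewrite (eq_mkseq Ri).
  by case: (r_settled i iN) => [all_Img|]; [left=> k; rewrite (eq_mkseq Ri) | right].
exists (extension_level n N D), (extension n Img h N r D); split.
- by rewrite leq_max leq_addr orbT.
- exact: extension_embedding.
- exact: extension_Img.
Qed.

Section EmbeddingInverse.

Variables (n : nat) (X : game) (f : seq nat -> seq (gM X)).
Hypothesis f_emb : game_embedding (G1 := Fgame n) f.

Definition in_image (u : seq (gM X)) : Prop := exists s, Ftree n s /\ f s = u.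

Definition preimage (u : seq (gM X)) : seq nat :=
  epsilon (inhabits [::]) (fun s => Ftree n s /\ f s = u).

Lemma preimageP u : in_image u -> Ftree n (preimage u) /\ f (preimage u) = u.
Proof. exact: epsilon_spec. Qed.

Lemma preimage_f t : Ftree n t -> preimage (f t) = t.
Proof.
have [_ f_inj _] := f_emb => Tt; have [Tp fp] := preimageP (ex_intro _ t (conj Tt erefl)).
exact: f_inj.
Qed.

Lemma in_image_take u k : in_image u -> in_image (take k u).
Proof.
have [f_chrono _ _] := f_emb => -[s [Ts <-]]; exists (take k s); split; first exact: Ftree_take.
by have [_ _ ->] := f_chrono s Ts.
Qed.

Lemma preimage_size u : in_image u -> size (preimage u) = size u.
Proof.
have [f_chrono _ _] := f_emb => /preimageP[Tp <-].
by have [_ -> _] := f_chrono _ Tp; rewrite preimage_f.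
Qed.

Lemma preimage_take u k : in_image u -> preimage (take k u) = take k (preimage u).
Proof.
have [f_chrono _ _] := f_emb => /preimageP[Tp fp]; rewrite -{1}fp.
by have [_ _ <-] := f_chrono _ Tp; rewrite preimage_f //; apply: Ftree_take.
Qed.

Lemma preimage_inj u u' : in_image u -> in_image u' -> preimage u = preimage u' -> u = u'.
Proof.
by move=> /preimageP[_ fu] /preimageP[_ fu'] uu'; rewrite -fu -fu' uu'.
Qed.

Lemma preimage_win R S : is_run (@gT X) R -> (forall k, in_image (mkseq R k)) ->
  (forall k, preimage (mkseq R k) = mkseq S k) -> (gA R <-> c00 S).
Proof.
have [_ _ f_win] := f_emb => R_run R_img RS.
have S_run : is_run (Ftree n) S by move=> k; rewrite -RS; case: (preimageP (R_img k)).
have SR k : f (mkseq S k) = mkseq R k by rewrite -RS; case: (preimageP (R_img k)).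
by have := f_win S R S_run SR; rewrite /= /Fwin; tauto.
Qed.

End EmbeddingInverse.

Lemma Fseq_fraisse : fraisse Fseq.
Proof.
split=> [X X_fin | n X f X_fin f_emb].
  have [//|//|//|//|//|R S _ /(_ 0) []|m [g [_ g_emb _]]] :=
    @partial_embedding_extends X 0 (fun _ => False) (fun _ => [::]) X_fin.
  by exists m, g.
have [m [g [nm g_emb g_preimage]]] :=
  partial_embedding_extends X_fin (in_image_take f_emb) (fun u Iu => proj1 (preimageP Iu))
    (preimage_size f_emb) (preimage_take f_emb) (@preimage_inj _ _ _) (preimage_win f_emb).
exists m, g; split=> // t Tt /=.
by rewrite g_preimage ?preimage_f //; exists t.
Qed.

Lemma c00_run R : c00 R -> exists M, is_run (Ftree M) R.
Proof.
move=> [N RN]; exists (depth (mkseq R N)); apply/Ftree_runP; split; last first.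
  by exists false => k; rewrite /depth size_mkseq => Nk; apply: RN; lia.
move=> k; have [kN | /RN->] := ltnP k N; last by [].
have [/(_ k) + _] := Ftree_depth (mkseq R N).
by rewrite size_mkseq nth_mkseq //; apply.
Qed.

Lemma cocone_node (H : game) (d : forall n, seq (gM (Fo Fseq n)) -> seq (gM H)) :
  cocone d -> forall a b t, Ftree a t -> Ftree b t -> d a t = d b t.
Proof.
move=> [_ d_comm] a b t Ta Tb.
have [ab | /ltnW ba] := leqP a b.
  by rewrite -(d_comm a b ab t Ta).
by rewrite -(d_comm b a ba t Tb).
Qed.

Lemma Fseq_colimit : @is_colimit Fseq G_FL (fun n t => t).
Proof.
split.
  split=> // n; split=> [t _ //| R S [_ R_c00] /mkseq_eq_fun RS].
  by case: R_c00 => N RN; exists N => k /RN; rewrite RS.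
move=> H d d_cocone; have [d_mor _] := d_cocone.
pose u t := d (depth t) t.
have uE m t : Ftree m t -> u t = d m t.
  by move=> Tt; apply: (cocone_node d_cocone) => //; apply: Ftree_depth.
split=> [|u1 u2 _ _ u1d u2d t _]; last first.
  by rewrite (u1d _ t (Ftree_depth t)) (u2d _ t (Ftree_depth t)).
exists u; split=> [|m]; last exact: uE.
split=> [t _ | R S R_c00 RS].
  have [d_chrono _] := d_mor (depth t); have [Td sd d_take] := d_chrono t (Ftree_depth t).
  by split=> // k; rewrite -d_take -uE //; apply/Ftree_take/Ftree_depth.
have [M R_run] := c00_run R_c00; have [_ d_win] := d_mor M.
by apply: (d_win R S) => [|k]; [split | rewrite -RS (uE M)].
Qed.

Theorem mainTheorem3 :
  exists F : omega_seq, fraisse F /\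
    exists c : forall n, seq (gM (Fo F n)) -> seq (gM G_FL), is_colimit c.
Proof.
exists Fseq; split; first exact: Fseq_fraisse.
by exists (fun n t => t); exact: Fseq_colimit.
Qed.
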